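(* Let $p>11$ be prime, $q=p^h$, and let $\mathcal{F}: aX^n+bY^n=Z^n$ with $a,b\in\mathbb{F}_q$, $ab\neq0$, $n>3$, be an irreducible Fermat curve over $\mathbb{F}_q$. Suppose $n=\frac{3(p^h-1)}{p^r-1}$ for a positive integer $r$ and $a,b\in\mathbb{F}_{p^r}$. Let $\mathcal{C}$ be the curve $aX^3+bY^3=Z^3$ over $\mathbb{F}_{p^r}$ and $k:=\#\{(x_0:x_1:x_2)\in\mathcal{C}(\mathbb{F}_{p^r}) : x_0x_1x_2=0\}$. (1) If $p^r\equiv1\pmod 3$, then $N_q(\mathcal{F})=\frac{n^2}{9}\big(N_{p^r}(\mathcal{C})-k\big)+\frac{nk}{3}$. (2) If $p^r\not\equiv1\pmod3$, then $N_q(\mathcal{F})=\frac{n^2}{9}(p^r-2)+n$.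
   Context: $N_{Q}(\mathcal{X})$ denotes the number of $\mathbb{F}_{Q}$-rational points of a projective curve $\mathcal{X}$, and $\mathcal{X}(\mathbb{F}_Q)$ the set of such points. *)

From mathcomp Require Import all_boot all_order all_algebra all_field.
Set Implicit Arguments. Unset Strict Implicit. Unset Printing Implicit Defensive.
Import GRing.Theory.
Local Open Scope ring_scope.

(* A triple (x,y,z) is the normalized representative of a point of P^2:
   its first nonzero coordinate equals 1 (so (0,0,0) is excluded). *)
Definition normalized (F : fieldType) (t : F * F * F) : bool :=
  let: (x, y, z) := t in
  if x != 0 then x == 1 else if y != 0 then y == 1 else z == 1.

Definition fermat_eq (F : fieldType) (n : nat) (a b : F) (t : F * F * F) : bool :=
  let: (x, y, z) := t in a * x ^+ n + b * y ^+ n == z ^+ n.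

Definition Npts (F : finFieldType) (n : nat) (a b : F) : nat :=
  #|[set t : F * F * F | normalized t && fermat_eq n a b t]|.

Definition Npts_axes (F : finFieldType) (n : nat) (a b : F) : nat :=
  #|[set t : F * F * F | [&& normalized t, fermat_eq n a b t &
                            t.1.1 * t.1.2 * t.2 == 0]]|.

(* The relation n (p^r - 1) = 3 (p^h - 1) forces p^r - 1 to divide p^h - 1,
   so n = 3 e with #F - 1 = e (#K - 1).  The e-th power map then sends F onto
   the subfield K, with fibre {0} over 0 and fibres of size e over K^*.
   Writing y^n = (y^e)^3, a point of C with x0 x1 x2 <> 0 lifts to e^2 points
   of F and every other point of C to e points, which is (1).  When
   p^r is not 1 mod 3, cubing is a bijection of K, so the chart X = 1 of C has
   p^r points, two of them on the axes, and there is one point at infinity;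
   this gives (2). *)

From mathcomp Require Import all_boot all_order all_algebra all_field.
From mathcomp Require Import zify ring.
Set Implicit Arguments. Unset Strict Implicit. Unset Printing Implicit Defensive.
Import GRing.Theory.
Local Open Scope ring_scope.

Lemma expf_card_pred (F : finFieldType) (x : F) : x != 0 -> x ^+ #|F|.-1 = 1.
Proof.
move=> x_nz; apply: (mulfI x_nz); rewrite mulr1 -exprS prednK ?expf_card //.
exact: ltnW (card_finNzRing_gt1 F).
Qed.

Lemma card_rootn_le (F : finFieldType) (e : nat) (y : F) : (0 < e)%N ->
  (#|[pred z : F | z ^+ e == y]| <= e)%N.
Proof.
move=> e_gt0; rewrite cardE -ltnS -(size_XnsubC y e_gt0).
apply: max_poly_roots; first by rewrite -size_poly_gt0 size_XnsubC.
  by apply/allP => z; rewrite mem_enum inE => /eqP ze; rewrite /root !hornerE ze subrr.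
exact: enum_uniq.
Qed.

Section SubfieldPower.

Variables (F K : finFieldType) (f : {rmorphism K -> F}) (e : nat).
Hypothesis card_pred_F : #|F|.-1 = (e * #|K|.-1)%N.

Lemma expf_in_subfield (z : F) : exists c : K, f c = z ^+ e.
Proof.
have [->|z_nz] := eqVneq z 0; first by exists (0 ^+ e); rewrite rmorphXn rmorph0.
have K_gt1 := card_finNzRing_gt1 K.
pose pol : {poly F} := 'X^(#|K|.-1) - 1.
have K_pos : (0 < #|K|.-1)%N by rewrite -ltnS prednK // ltnW.
have size_pol : size pol = #|K| by rewrite size_XnsubC // prednK // ltnW.
have [c|no_c] := pickP (fun c => f c == z ^+ e); first by move/eqP; exists c.
(* Otherwise [pol], of degree [#|K| - 1], has the [#|K|] distinct roots
   [z ^+ e] and [f c] for [c != 0]. *)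
have := @max_poly_roots _ pol (z ^+ e :: map f (enum (predC1 0))).
rewrite -size_poly_gt0 size_pol ltnW //= size_map -cardE cardC1 (prednK (ltnW K_gt1)) ltnn.
move=> /(_ isT) no_room; suff: false by []; apply: no_room; last first.
  rewrite map_inj_uniq ?enum_uniq ?andbT; last exact: fmorph_inj.
  by apply/mapP => -[c _ /esym/eqP]; rewrite no_c.
rewrite /root !hornerE -exprM -card_pred_F expf_card_pred // subrr eqxx /=.
apply/allP => w /mapP[c]; rewrite mem_enum => c_nz ->.
by rewrite /root !hornerE -rmorphXn expf_card_pred // rmorph1 subrr.
Qed.

Definition subfield_pow (y : F) : K := odflt 0 [pick c | f c == y ^+ e].

Lemma subfield_powE (y : F) : f (subfield_pow y) = y ^+ e.
Proof.
rewrite /subfield_pow; case: pickP => [c /eqP //|no_c].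
by have [c fc] := expf_in_subfield y; have := no_c c; rewrite fc eqxx.
Qed.

Hypothesis e_gt0 : (0 < e)%N.

Definition fiber_weight (c : K) : nat := if c == 0 then 1%N else e.

Lemma card_subfield_pow_fiber (c : K) :
  #|[pred y | subfield_pow y == c]| = fiber_weight c.
Proof.
have fiberE d : #|[pred y | subfield_pow y == d]| = #|[pred z | z ^+ e == f d]|.
  by apply: eq_card => y; rewrite !inE -(inj_eq (fmorph_inj f)) subfield_powE.
have fiber0 : #|[pred y | subfield_pow y == 0]| = 1%N.
  rewrite fiberE rmorph0 -(card1 (0 : F)); apply: eq_card => z.
  by rewrite !inE expf_eq0 e_gt0.
rewrite /fiber_weight; case: eqP => [->|/eqP c_nz] //.
have total : (\sum_(d : K) #|[pred y | subfield_pow y == d]| = #|F|)%N.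
  rewrite -sum1_card (partition_big subfield_pow xpredT) //=.
  by apply: eq_bigr => d _; rewrite sum1_card.
rewrite (bigD1 0) //= fiber0 -[#|F|]prednK ?(ltnW (card_finNzRing_gt1 F)) // card_pred_F in total.
have /leqif_sum le_sum : forall d : K, d != 0 ->
    (#|[pred y | subfield_pow y == d]| <= e ?= iff (#|[pred y | subfield_pow y == d]| == e))%N.
  by move=> d _; rewrite fiberE; apply/leqif_eq/card_rootn_le.
move: le_sum.2; rewrite sum_nat_const cardC1 mulnC -(eqn_add2l 1) total add1n eqxx.
by move=> /esym/forall_inP/(_ c c_nz)/eqP.
Qed.

Lemma sum_subfield_pow (G : K -> nat) :
  (\sum_(y : F) G (subfield_pow y) = \sum_(c : K) fiber_weight c * G c)%N.
Proof.
rewrite (partition_big subfield_pow xpredT) //=; apply: eq_bigr => c _.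
rewrite (eq_bigr (fun=> G c)); last by move=> y /eqP ->.
by rewrite sum_nat_const card_subfield_pow_fiber.
Qed.

End SubfieldPower.

Lemma sum_nat_supp2 (T : finType) (a b : T) (G : T -> nat) : a != b ->
  (forall x, x != a -> x != b -> G x = 0%N) -> (\sum_x G x = G a + G b)%N.
Proof.
move=> neq_ab G0; rewrite (bigD1 a) //= (bigD1 b) 1?eq_sym //= big1 ?addn0 //.
by move=> x /andP[]; apply: G0.
Qed.

Lemma card_normalized (F : finFieldType) (Q : pred (F * F * F)) :
  #|[set t | normalized t && Q t]| =
  (\sum_(y : F) \sum_(z : F) Q (1%R, y, z) + \sum_(z : F) Q (0%R, 1%R, z)
     + Q (0%R, 0%R, 1%R))%N.
Proof.
transitivity (\sum_(x : F) \sum_(y : F) \sum_(z : F) (normalized (x, y, z) && Q (x, y, z)))%N.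
  rewrite -sum1_card big_mkcond pair_bigA pair_bigA /=.
  by apply: eq_bigr => -[[x y] z] _; rewrite inE; case: (_ && _).
rewrite (@sum_nat_supp2 _ 1 0) ?oner_neq0 //; last first.
  move=> x x_neq1 x_neq0; apply: big1 => y _; apply: big1 => z _.
  by rewrite /normalized x_neq0 (negbTE x_neq1).
rewrite -addnA; congr (_ + _)%N.
  by apply: eq_bigr => y _; apply: eq_bigr => z _; rewrite /normalized oner_neq0 eqxx.
rewrite (@sum_nat_supp2 _ 1 0) ?oner_neq0 //; last first.
  move=> y y_neq1 y_neq0; apply: big1 => z _.
  by rewrite /normalized eqxx /= y_neq0 (negbTE y_neq1).
congr (_ + _)%N.
  by apply: eq_bigr => z _; rewrite /normalized eqxx /= oner_neq0 eqxx.
rewrite (bigD1 1) //= /normalized !eqxx /= big1 ?addn0 // => z.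
by move=> /negbTE ->.
Qed.

(* The chart [X = 1] of [a X^3 + b Y^3 = Z^3]; the remaining points
   [(0 : 1 : z)] are counted by [n_cube_roots b]. *)
Definition cubic_chart (K : nzRingType) (a b y z : K) : bool :=
  a + b * y ^+ 3 == z ^+ 3.

Section CubicCounts.

Variables (K : finFieldType) (a b : K).

Definition n_chart_torus : nat :=
  \sum_(y : K) \sum_(z : K) (cubic_chart a b y z && (y * z != 0)%R).
Definition n_chart_axes : nat :=
  \sum_(y : K) \sum_(z : K) (cubic_chart a b y z && (y * z == 0)%R).
Definition n_cube_roots : nat := \sum_(z : K) (b == z ^+ 3)%R.

Let zero_cube : (0 : K) ^+ 3 = 0. Proof. by rewrite expr0n. Qed.

Lemma Npts_cubic : Npts 3 a b = (n_chart_torus + n_chart_axes + n_cube_roots)%N.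
Proof.
rewrite /Npts card_normalized /fermat_eq expr1n zero_cube !mulr0 addr0.
rewrite eq_sym oner_eq0 addn0; congr (_ + _)%N.
  rewrite -big_split /=; apply: eq_bigr => y _; rewrite -big_split /=.
  by apply: eq_bigr => z _; rewrite mulr1 /cubic_chart; case: (_ == _ ^+ 3); case: (y * z == 0).
by apply: eq_bigr => z _; rewrite add0r mulr1.
Qed.

Lemma Npts_axes_cubic : Npts_axes 3 a b = (n_chart_axes + n_cube_roots)%N.
Proof.
rewrite /Npts_axes (@card_normalized _ [pred t | fermat_eq 3 a b t & t.1.1 * t.1.2 * t.2 == 0]).
rewrite /= /fermat_eq expr1n zero_cube !mulr0 addr0 eq_sym oner_eq0 addn0.
congr (_ + _)%N; first by apply: eq_bigr => y _; apply: eq_bigr => z _; rewrite mulr1 mul1r.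
by apply: eq_bigr => z _; rewrite add0r mulr1 !mul0r eqxx andbT.
Qed.

End CubicCounts.

Section FermatPullback.

Variables (F K : finFieldType) (f : {rmorphism K -> F}) (e : nat).
Hypotheses (card_pred_F : #|F|.-1 = (e * #|K|.-1)%N) (e_gt0 : (0 < e)%N).
Variables (a b : K).
Hypotheses (a_nz : a != 0) (b_nz : b != 0).

Local Notation w := (fiber_weight e).

Lemma weighted_chart_term (c d : K) :
  (w c * (w d * cubic_chart a b c d) =
   e * e * (cubic_chart a b c d && (c * d != 0)%R) +
   e * (cubic_chart a b c d && (c * d == 0)%R))%N.
Proof.
rewrite /fiber_weight mulf_eq0.
have [->|_] := eqVneq c 0; have [->|_] := eqVneq d 0.
- by rewrite /cubic_chart expr0n /= mulr0 addr0 (negbTE a_nz) /= !muln0.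
- by rewrite mul1n; case: cubic_chart; rewrite /= ?muln0.
- by rewrite mul1n; case: cubic_chart; rewrite /= ?muln0.
- by rewrite mulnA; case: cubic_chart; rewrite /= ?muln0 ?addn0.
Qed.

Lemma Npts_pullback : Npts (e * 3) (f a) (f b) =
  (e * e * n_chart_torus a b + e * (n_chart_axes a b + n_cube_roots b))%N.
Proof.
have powE y : y ^+ (e * 3) = f (subfield_pow f e y ^+ 3).
  by rewrite rmorphXn subfield_powE // exprM.
rewrite /Npts card_normalized /fermat_eq expr1n expr0n muln_eq0 (negbTE (lt0n_neq0 e_gt0)).
rewrite !mulr0 addr0 eq_sym oner_eq0 addn0 mulnDr addnA; congr (_ + _)%N.
  transitivity (\sum_(y : F) \sum_(z : F)
      cubic_chart a b (subfield_pow f e y) (subfield_pow f e z))%N.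
    apply: eq_bigr => y _; apply: eq_bigr => z _.
    by rewrite mulr1 !powE -rmorphM -rmorphD (inj_eq (fmorph_inj f)).
  under eq_bigr => y _ do
    rewrite (sum_subfield_pow f card_pred_F e_gt0 (cubic_chart a b (subfield_pow f e y))).
  rewrite (sum_subfield_pow f card_pred_F e_gt0 (fun c => \sum_d w d * cubic_chart a b c d)%N).
  rewrite /n_chart_torus /n_chart_axes !big_distrr -big_split /=.
  apply: eq_bigr => c _; rewrite !big_distrr -big_split /=.
  by apply: eq_bigr => d _; rewrite weighted_chart_term.
transitivity (\sum_(z : F) (b == subfield_pow f e z ^+ 3))%N.
  by apply: eq_bigr => z _; rewrite add0r mulr1 powE (inj_eq (fmorph_inj f)).
rewrite (sum_subfield_pow f card_pred_F e_gt0 (fun d => b == d ^+ 3)).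
rewrite /n_cube_roots big_distrr /=; apply: eq_bigr => d _.
rewrite /fiber_weight; have [->|//] := eqVneq d 0.
by rewrite expr0n /= (negbTE b_nz) !muln0.
Qed.

End FermatPullback.

Section CubingBijective.

Variable K : finFieldType.
Hypothesis card_mod3 : (#|K| %% 3 = 2)%N.

Lemma cube_bij : bijective (fun x : K => x ^+ 3).
Proof.
pose m := (2 * (#|K| %/ 3) + 1)%N.
have m3 : ((3 * m).+1 = 2 * #|K|)%N.
  by have := divn_eq #|K| 3; rewrite card_mod3 /m; lia.
have cube_pow_m (x : K) : x ^+ (3 * m) = x.
  have [->|x_nz] := eqVneq x 0; first by rewrite expr0n /m muln_eq0 addn1.
  by apply: (mulIf x_nz); rewrite -exprSr m3 mulnC exprM expf_card expr2.
exists (fun x => x ^+ m) => x; rewrite -exprM; first exact: cube_pow_m.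
by rewrite mulnC cube_pow_m.
Qed.

Lemma sum_cube (G : K -> nat) : (\sum_(c : K) G (c ^+ 3) = \sum_(u : K) G u)%N.
Proof. by symmetry; rewrite (reindex (fun c : K => c ^+ 3)) //; apply: onW_bij cube_bij. Qed.

Lemma n_cube_roots_eq1 (c : K) : n_cube_roots c = 1%N.
Proof.
rewrite /n_cube_roots (sum_cube (fun u => c == u)) (bigD1 c) //= eqxx big1 // => u.
by move=> /negbTE; rewrite eq_sym => ->.
Qed.

Variables (a b : K).

Lemma n_chart_eq_card : (n_chart_torus a b + n_chart_axes a b)%N = #|K|.
Proof.
rewrite -big_split -sum1_card; apply: eq_bigr => y _; rewrite -big_split /=.
rewrite -[1%N](n_cube_roots_eq1 (a + b * y ^+ 3)) /n_cube_roots; apply: eq_bigr => z _.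
by rewrite /cubic_chart; case: (_ == _); case: (y * z == 0).
Qed.

Lemma n_chart_axes_eq2 : a != 0 -> b != 0 -> n_chart_axes a b = 2%N.
Proof.
move=> a_nz b_nz.
transitivity (\sum_(u : K) \sum_(v : K) ((a + b * u == v) && (u * v == 0))%R)%N.
  rewrite -(sum_cube (fun u => \sum_v ((a + b * u == v) && (u * v == 0))%R)%N).
  apply: eq_bigr => y _; rewrite -(sum_cube (fun v => (a + b * y ^+ 3 == v) && (y ^+ 3 * v == 0))).
  by apply: eq_bigr => z _; rewrite -exprMn expf_eq0.
transitivity (\sum_(u : K) ((u == 0) || (a + b * u == 0))%R)%N.
  apply: eq_bigr => u _; rewrite (bigD1 (a + b * u)) //= eqxx big1 ?addn0 ?mulf_eq0 // => v.
  by move=> /negbTE; rewrite eq_sym => ->.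
rewrite (@sum_nat_supp2 _ 0 (- (a / b))).
- by rewrite eqxx mulrN mulrCA divff // mulr1 subrr eqxx orbT.
- by rewrite eq_sym oppr_eq0 mulf_eq0 invr_eq0 (negbTE a_nz) (negbTE b_nz).
move=> u /negbTE -> u_neq /=; case: eqP => // abu; case/eqP: u_neq.
apply: (mulfI b_nz); rewrite mulrN mulrCA divff // mulr1.
by apply/eqP; rewrite -addr_eq0 addrC abu.
Qed.

End CubingBijective.

Lemma dvdn_expn_sub1_mul3 (p r h : nat) : (4 < p)%N -> (0 < r)%N ->
  (p ^ r - 1 %| 3 * (p ^ h - 1))%N -> (p ^ r - 1 %| p ^ h - 1)%N.
Proof.
move=> p_gt4 r_gt0; set M := (p ^ r - 1)%N.
have pr_pos : (0 < p ^ r)%N by rewrite expn_gt0; lia.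
have ph_pos : (0 < p ^ h)%N by rewrite expn_gt0; lia.
have pr_mod : (p ^ r = 1 %[mod M])%N by rewrite -[in LHS](subnK pr_pos) modnDl.
have ph_mod : (p ^ h = p ^ (h %% r) %[mod M])%N.
  have -> : (p ^ h = (p ^ r) ^ (h %/ r) * p ^ (h %% r))%N.
    by rewrite -expnM -expnD mulnC -divn_eq.
  by rewrite -modnMml -modnXm pr_mod modnXm exp1n modnMml mul1n.
have ps_small : (3 * p ^ (h %% r) < M)%N.
  have p_gt1 : (1 < p)%N by lia.
  have ps_le : (p ^ (h %% r) <= p ^ r.-1)%N.
    by rewrite (leq_exp2l _ _ p_gt1) -ltnS (prednK r_gt0) ltn_mod.
  have px : (5 * p ^ r.-1 <= p * p ^ r.-1)%N by rewrite leq_mul2r p_gt4 orbT.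
  have x_pos : (0 < p ^ r.-1)%N by rewrite expn_gt0 ltnW.
  have pr : (p ^ r = p * p ^ r.-1)%N by rewrite -expnS (prednK r_gt0).
  rewrite /M pr; move: ps_le px x_pos; move: (p * p ^ r.-1)%N => z; move: (p ^ r.-1)%N (p ^ (h %% r))%N => x y.
  by clear; lia.
have ps_pos : (0 < p ^ (h %% r))%N by rewrite expn_gt0; lia.
move=> dvd3; rewrite -eqn_mod_dvd //; apply/eqP.
have : (3 * p ^ (h %% r) = 3 %[mod M])%N.
  rewrite -modnMmr -ph_mod modnMmr; apply/eqP.
  rewrite eqn_mod_dvd; first by rewrite -[X in (_ - X)%N]muln1 -mulnBr.
  exact: leq_pmulr.
have three_lt_M : (3 < M)%N by apply: leq_ltn_trans ps_small; exact: leq_pmulr.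
rewrite (modn_small ps_small) (modn_small three_lt_M) ph_mod => /eqP.
by rewrite -{2}[3%N]muln1 eqn_pmul2l // => /eqP ->.
Qed.

Lemma expn_mod3 (p r : nat) : prime p -> p != 3%N ->
  (p ^ r %% 3 != 1)%N -> (p ^ r %% 3 = 2)%N.
Proof.
move=> p_prime p_neq3; have : ~~ (3 %| p ^ r)%N.
  by rewrite Euclid_dvdX // dvdn_prime2 // eq_sym (negbTE p_neq3).
rewrite /dvdn; have := ltn_mod (p ^ r) 3; move: (p ^ r %% 3)%N => m; lia.
Qed.

Theorem theorem5p1 (p h r n : nat) (F K : finFieldType) (f : {rmorphism K -> F})
  (a b : K) :
  prime p -> (11 < p)%N -> (0 < h)%N -> (0 < r)%N ->
  #|F| = (p ^ h)%N -> #|K| = (p ^ r)%N ->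
  a != 0 -> b != 0 -> (3 < n)%N ->
  (n * (p ^ r - 1) = 3 * (p ^ h - 1))%N ->
  let k := Npts_axes 3 a b in
  ((p ^ r %% 3 = 1)%N ->
     (Npts n (f a) (f b))%:R =
       (n ^ 2)%:R / 9%:R * ((Npts 3 a b)%:R - k%:R) + n%:R * k%:R / 3%:R :> rat) /\
  ((p ^ r %% 3 <> 1)%N ->
     (Npts n (f a) (f b))%:R =
       (n ^ 2)%:R / 9%:R * ((p ^ r)%:R - 2%:R) + n%:R :> rat).
Proof.
move=> p_prime p_gt11 _ r_gt0 cardF cardK a_nz b_nz n_gt3 n_eq k.
have M_pos : (0 < p ^ r - 1)%N by rewrite subn_gt0 -cardK card_finNzRing_gt1.
have M_dvd : (p ^ r - 1 %| p ^ h - 1)%N.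
  by apply: dvdn_expn_sub1_mul3 (ltn_trans _ p_gt11) r_gt0 _; rewrite // -n_eq dvdn_mull.
set e := ((p ^ h - 1) %/ (p ^ r - 1))%N.
have n_e : n = (e * 3)%N.
  by apply/eqP; rewrite -(eqn_pmul2r M_pos) n_eq mulnAC divnK // mulnC.
have e_gt0 : (0 < e)%N by rewrite lt0n; apply: contraTneq n_gt3 => e0; rewrite n_e e0.
have card_pred_F : #|F|.-1 = (e * #|K|.-1)%N by rewrite cardF cardK -!subn1 divnK.
(* Formula (1) holds without the congruence hypothesis. *)
rewrite /k n_e Npts_pullback // Npts_cubic Npts_axes_cubic; split=> [_ | q_mod3].
  by rewrite !natrD !natrM; field.
have K_mod3 : (#|K| %% 3 = 2)%N.
  rewrite cardK expn_mod3 //; last exact/eqP.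
  by apply: contraTneq p_gt11 => ->.
rewrite -cardK -(n_chart_eq_card K_mod3 a b) (n_chart_axes_eq2 K_mod3 a_nz b_nz).
rewrite (n_cube_roots_eq1 K_mod3).
by rewrite !natrD !natrM; field.
Qed.
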